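(* Let $v$ be a game on $N$ with $n=|N|$, let $i\in N$, and let $v_i$ be the component game (the unique $v_i\in\ell^2(V)$ with $v_i(\emptyset)=0$ and $\mathrm{d}v_i=P\mathrm{d}_iv$). Define $u_i\in\ell^2(V)$ by, for each $S\subset N\setminus\{i\}$, $$u_i(S\cup\{i\}) = \frac{1}{n2^n}\sum_{T\subset N\setminus\{i\}} \frac{\binom{n}{|S\triangle T|+1}+\binom{n}{|S\triangle T|+2}+\cdots+\binom{n}{n}}{\binom{n-1}{|S\triangle T|}}\bigl(v(T\cup\{i\})-v(T)\bigr),$$ and $u_i(S) = -u_i(S\cup\{i\})$, where $S\triangle T=(S\cup T)\setminus(S\cap T)$. Then $v_i = u_i - u_i(\emptyset)$. In particular, $$u_i(\emptyset) = -\frac{1}{n2^n}\sum_{T\subset N\setminus\{i\}}\frac{\binom{n}{|T|+1}+\cdots+\binom{n}{n}}{\binom{n-1}{|T|}}\bigl(v(T\cup\{i\})-v(T)\bigr).$$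
   Context: Let $N$ be a finite set of players. A game is a function $v\colon 2^N\to\mathbb{R}$ with $v(\emptyset)=0$. The hypercube graph $G=(V,E)$ has $V=2^N$ and oriented edges $E=\{(S,S\cup\{i\}) : i\in N,\ S\subset N\setminus\{i\}\}$. $\ell^2(V)$ and $\ell^2(E)$ are the spaces of real functions on $V$ and $E$ with the standard inner products $\sum_{S}u(S)w(S)$ and $\sum_{e}f(e)g(e)$. $\mathrm{d}\colon \ell^2(V)\to\ell^2(E)$ is $\mathrm{d}u(S,S\cup\{i\}) = u(S\cup\{i\})-u(S)$. For $i\in N$, $\mathrm{d}_i\colon\ell^2(V)\to\ell^2(E)$ is defined by $\mathrm{d}_i u(S,S\cup\{j\}) = u(S\cup\{i\})-u(S)$ if $j=i$ and $0$ if $j\ne i$. $P$ is the orthogonal projection of $\ell^2(E)$ onto the range $\mathcal{R}(\mathrm{d})$. *)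

From HB Require Import structures.
From mathcomp Require Import all_boot all_order all_algebra.
Set Implicit Arguments. Unset Strict Implicit. Unset Printing Implicit Defensive.
Import Order.TTheory GRing.Theory Num.Theory.
Local Open Scope ring_scope.

(* Players: a finite type I (the set N = [set: I]).
   Vertices V = {set I}; l2(V) = functions {set I} -> R.
   Edges E = pairs (S, j) with j \notin S (the oriented edge (S, S u {j}));
   l2(E) is represented by functions {set I} * I -> R, of which only the
   values on edges matter (inner product sums over edges only). *)

Definition is_edge (I : finType) (e : {set I} * I) : bool := e.2 \notin e.1.

Definition inner_E (R : ringType) (I : finType) (f g : {set I} * I -> R) : R :=
  \sum_(e : {set I} * I | is_edge e) f e * g e.

Definition dV (R : ringType) (I : finType) (u : {set I} -> R) : {set I} * I -> R :=
  fun e => u (e.2 |: e.1) - u e.1.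

Definition dVi (R : ringType) (I : finType) (i : I) (u : {set I} -> R)
  : {set I} * I -> R :=
  fun e => if e.2 == i then u (i |: e.1) - u e.1 else 0.

(* g = P f, P the orthogonal projection of l2(E) onto range(d):
   g lies in range(d) and f - g is orthogonal to range(d).
   (Equality in l2(E) means equality on edges.) *)
Definition is_proj_range_d (R : ringType) (I : finType)
  (f g : {set I} * I -> R) : Prop :=
  (exists u : {set I} -> R, forall e, is_edge e -> g e = dV u e) /\
  (forall w : {set I} -> R, inner_E (fun e => f e - g e) (dV w) = 0).

Definition component_game (R : ringType) (I : finType) (v : {set I} -> R) (i : I)
  (vi : {set I} -> R) : Prop :=
  vi set0 = 0 /\ is_proj_range_d (dVi i v) (dV vi).

Definition symdiff (I : finType) (S T : {set I}) : {set I} :=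
  (S :|: T) :\: (S :&: T).

Definition coef (R : fieldType) (n k : nat) : R :=
  (\sum_(k.+1 <= m < n.+1) 'C(n, m))%N%:R / ('C(n.-1, k))%:R.

(* u_i(S u {i}) for S a subset of N \ {i} *)
Definition ui_plus (R : fieldType) (I : finType) (v : {set I} -> R) (i : I)
  (S : {set I}) : R :=
  (#|I| * 2 ^ #|I|)%N%:R^-1 *
  \sum_(T : {set I} | i \notin T)
     coef R #|I| #|symdiff S T| * (v (i |: T) - v T).

Definition ui (R : fieldType) (I : finType) (v : {set I} -> R) (i : I)
  (X : {set I}) : R :=
  if i \in X then ui_plus v i (X :\ i) else - ui_plus v i X.

(* The orthogonality condition in [is_proj_range_d] is the normal equation
   d^T (d_i v - d u) = 0, i.e. L u = d^T d_i v for the Laplacian L = d^T d of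
   the hypercube. As the hypercube is connected, ker d consists of the constants,
   which gives uniqueness.  For existence, an odd extension u(S ∪ {i}) = h(S) =
   -u(S), S ⊆ N∖{i}, has L u(S ∪ {i}) = (2 + L') h(S), with L' the Laplacian of
   the subcube 2^(N∖{i}), while d^T d_i v (S ∪ {i}) = v(S ∪ {i}) - v(S).  The
   operator 2 + L' commutes with the translations S ↦ S △ T of the subcube, so
   h is the convolution of these increments with a Green function of 2 + L'.
   For the radial function c(|U|) / (n 2^n) of [ui_plus] the Green equation is a
   three-term recurrence in k = |U| ([coef_recurrence]), which reduces to
   (k+1) C(n,k+1) = (n-k) C(n,k). *)

From HB Require Import structures.
From mathcomp Require Import all_boot all_order all_algebra.
From mathcomp Require Import zify ring.
Set Implicit Arguments. Unset Strict Implicit. Unset Printing Implicit Defensive.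
Import Order.TTheory GRing.Theory Num.Theory.
Local Open Scope ring_scope.

Definition bin_tail (n k : nat) : nat := (\sum_(k.+1 <= m < n.+1) 'C(n, m))%N.

Lemma bin_tailS n k : (k < n)%N -> bin_tail n k = ('C(n, k.+1) + bin_tail n k.+1)%N.
Proof. by move=> lt_kn; rewrite /bin_tail big_ltn. Qed.

Lemma bin_tail_id n : bin_tail n n = 0%N.
Proof. by rewrite /bin_tail big_geq. Qed.

Lemma bin_tail0 n : (bin_tail n 0).+1 = (2 ^ n)%N.
Proof.
have -> : (2 = 1 + 1)%N by [].
rewrite expnDn big_ord_recl bin0 exp1n !mul1n add1n.
by rewrite /bin_tail big_add1 big_mkord; congr _.+1; apply: eq_bigr => j _; rewrite !exp1n !muln1.
Qed.

Lemma bin_tail_rec0 m :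
  ((2 + m) * bin_tail m.+1 0 = bin_tail m.+1 1 + m.+1 * 2 ^ m.+1)%N.
Proof. by rewrite -bin_tail0 bin_tailS // bin1; lia. Qed.

(* The factor 2 + k.+1 + (m - k.+1) = m + 2 is split as in [coef_recurrence]. *)
Lemma bin_tail_rec m k : (k < m)%N ->
  ((2 + k.+1 + (m - k.+1)) * bin_tail m.+1 k.+1
   = (m - k) * bin_tail m.+1 k + k.+2 * bin_tail m.+1 k.+2)%N.
Proof.
move=> lt_km; have := mul_bin_left m.+1 k.+1.
rewrite subSS (@bin_tailS m.+1 k) ?(@bin_tailS m.+1 k.+1) ?ltnS ?(ltnW lt_km) //; nia.
Qed.

Section CoefRecurrence.
Variable R : numFieldType.

Lemma coefE n k : coef R n k = (bin_tail n k)%:R / ('C(n.-1, k))%:R.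
Proof. by []. Qed.

Lemma bin_ratio m k : (k < m)%N ->
  (m - k)%:R / ('C(m, k.+1))%:R = k.+1%:R / ('C(m, k))%:R :> R.
Proof.
move=> lt_km; apply/eqP; rewrite eqr_div ?pnatr_eq0 -?lt0n ?bin_gt0 ?(ltnW lt_km) //.
by rewrite -!natrM mul_bin_left.
Qed.

Lemma coef_succ m k : (k <= m)%N ->
  (m - k)%:R * coef R m.+1 k.+1 = k.+1%:R * (bin_tail m.+1 k.+1)%:R / ('C(m, k))%:R.
Proof.
rewrite leq_eqVlt => /predU1P[->|lt_km]; first by rewrite bin_tail_id subnn !(mul0r, mulr0).
by rewrite coefE mulrCA bin_ratio // mulrCA mulrA.
Qed.

Lemma coef_pred m k : (k < m)%N ->
  k.+1%:R * coef R m.+1 k = (m - k)%:R * (bin_tail m.+1 k)%:R / ('C(m, k.+1))%:R.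
Proof. by move=> lt_km; rewrite coefE mulrCA -bin_ratio // mulrCA mulrA. Qed.

Lemma coef_recurrence n k : (0 < n)%N -> (k < n)%N ->
  2%:R * coef R n k + k%:R * (coef R n k - coef R n k.-1)
  + (n.-1 - k)%:R * (coef R n k - coef R n k.+1)
  = if k == 0%N then (n * 2 ^ n)%:R else 0.
Proof.
case: n => // m _; rewrite ltnS /= => le_km.
rewrite !mulrBr coef_succ //.
case: k le_km => [|k] le_km /=.
  have := congr1 (fun x => x%:R : R) (bin_tail_rec0 m); rewrite !coefE bin0 !divr1.
  rewrite !(natrD, natrM) => rec; rewrite mul0r subrr addr0.
  by rewrite subn0 mul1r -[RHS](addKr (bin_tail m.+1 1)%:R) -rec; ring.
rewrite coef_pred // !coefE.
have := congr1 (fun x => x%:R : R) (bin_tail_rec le_km); rewrite !(natrD, natrM) => rec.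
rewrite /=; set c := ('C(m, k.+1))%:R.
transitivity (((2 + k.+1%:R + (m - k.+1)%:R) * (bin_tail m.+1 k.+1)%:R
  - ((m - k)%:R * (bin_tail m.+1 k)%:R + k.+2%:R * (bin_tail m.+1 k.+2)%:R)) / c).
  by ring.
by rewrite rec subrr mul0r.
Qed.
End CoefRecurrence.

Section Hypercube.
Variable I : finType.
Implicit Types (X S T U : {set I}) (i j : I).

Definition toggle X j : {set I} := if j \in X then X :\ j else j |: X.

Lemma in_toggle X j x : (x \in toggle X j) = (x == j) (+) (x \in X).
Proof. by rewrite /toggle; case: ifP => jX; rewrite !inE; case: eqVneq => // ->; rewrite jX. Qed.

Lemma toggle_in X j : j \in X -> toggle X j = X :\ j.
Proof. by rewrite /toggle => ->. Qed.

Lemma toggle_notin X j : j \notin X -> toggle X j = j |: X.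
Proof. by rewrite /toggle => /negbTE ->. Qed.

Lemma in_toggle_neq X i j : j != i -> (i \in toggle X j) = (i \in X).
Proof. by move=> ji; rewrite in_toggle eq_sym (negbTE ji). Qed.

Lemma toggleD1 X i j : j != i -> toggle X j :\ i = toggle (X :\ i) j.
Proof.
move=> ji; apply/setP => x; rewrite !inE !in_toggle !inE.
by case: eqVneq => // ->; rewrite eq_sym (negbTE ji).
Qed.

Lemma card_toggle X j : #|toggle X j| = if j \in X then #|X|.-1 else #|X|.+1.
Proof. by rewrite /toggle; case: ifP => jX; rewrite ?cardsU1 (cardsD1 j X) jX. Qed.

Lemma in_symdiff S T x : (x \in symdiff S T) = (x \in S) (+) (x \in T).
Proof. by rewrite !inE; case: (x \in S); case: (x \in T). Qed.

Lemma symdiff_toggle S T j : symdiff (toggle S j) T = toggle (symdiff S T) j.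
Proof. by apply/setP => x; rewrite in_symdiff !in_toggle in_symdiff addbA. Qed.

Lemma symdiff0s T : symdiff set0 T = T.
Proof. by apply/setP => x; rewrite in_symdiff inE. Qed.

Lemma symdiff_eq0 S T : (symdiff S T == set0) = (S == T).
Proof.
apply/eqP/eqP => [/setP ST0|->]; apply/setP => x.
  by move: (ST0 x); rewrite in_symdiff inE; case: (x \in S); case: (x \in T).
by rewrite in_symdiff inE addbb.
Qed.

Lemma hypercube_const (A : Type) (z : {set I} -> A) :
  (forall S j, j \notin S -> z (j |: S) = z S) -> forall X, z X = z set0.
Proof.
move=> z_edge X; elim: {X}#|X| {-2}X (erefl #|X|) => [|k IH] X.
  by move/eqP; rewrite cards_eq0 => /eqP ->.
move=> cardX; have [j jX] : exists j, j \in X by apply/set0Pn; rewrite -card_gt0 cardX.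
rewrite -(setD1K jX) z_edge ?setD11 //; apply: IH.
by move: cardX; rewrite (cardsD1 j X) jX => -[].
Qed.

End Hypercube.

Section Divergence.
Variables (R : nzRingType) (I : finType).
Implicit Types (f g : {set I} * I -> R) (u w : {set I} -> R) (X : {set I}).

Definition div_E g X : R :=
  \sum_(j in X) g (X :\ j, j) - \sum_(j | j \notin X) g (X, j).

Definition lapV u X : R := \sum_j (u X - u (toggle X j)).

Lemma sum_edges (F : {set I} * I -> R) :
  \sum_(e | is_edge e) F e = \sum_(X : {set I}) \sum_(j | j \notin X) F (X, j).
Proof. by rewrite pair_big_dep; apply: eq_big => -[X j]. Qed.

Lemma sum_edges_head (F : {set I} * I -> R) :
  \sum_(e | is_edge e) F e = \sum_(X : {set I}) \sum_(j in X) F (X :\ j, j).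
Proof.
rewrite sum_edges (exchange_big_dep xpredT) //= [RHS](exchange_big_dep xpredT) //=.
apply: eq_bigr => j _; rewrite (reindex_onto (fun X => X :\ j) (fun Y => j |: Y)) /=.
  apply: eq_bigl => X; rewrite setD11 /=.
  by apply/eqP/idP => [<-|/setD1K //]; rewrite setU11.
by move=> Y jY; rewrite setU1K.
Qed.

Lemma inner_E_dV g w : inner_E g (dV w) = \sum_(X : {set I}) div_E g X * w X.
Proof.
rewrite /inner_E /dV; under eq_bigr do rewrite mulrBr.
rewrite sumrB sum_edges_head sum_edges -sumrB; apply: eq_bigr => X _.
rewrite /div_E mulrBl !mulr_suml; congr (_ - _).
by apply: eq_bigr => j jX; rewrite /= setD1K.
Qed.

Lemma div_dV u X : div_E (dV u) X = lapV u X.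
Proof.
rewrite /lapV (bigID (mem X)) /= /div_E /dV; congr (_ + _).
  by apply: eq_bigr => j jX; rewrite /= setD1K // toggle_in.
by rewrite -sumrN; apply: eq_bigr => j jX; rewrite /= toggle_notin // opprB.
Qed.

Lemma sum_if_eq (P : pred I) (a : I) (F : I -> R) :
  \sum_(j | P j) (if j == a then F j else 0) = if P a then F a else 0.
Proof.
rewrite -big_mkcondr; case: ifP => Pa; [apply: big_pred1 | apply: big_pred0] => j;
  by case: (eqVneq j a) => [->|/negbTE ja]; rewrite /= ?eqxx ?ja ?Pa ?andbF.
Qed.

Lemma div_dVi (i : I) u X :
  div_E (dVi i u) X = if i \in X then u X - u (X :\ i) else - (u (i |: X) - u X).
Proof.
rewrite /div_E /dVi /= !sum_if_eq.
by case: ifP => iX; rewrite ?setD1K ?sub0r ?subr0.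
Qed.

Lemma div_EB f g X : div_E (fun e => f e - g e) X = div_E f X - div_E g X.
Proof.
rewrite /div_E !sumrB !opprB addrACA [RHS]addrACA.
by rewrite (addrC (- \sum_(j | j \notin X) f (X, j))).
Qed.

Lemma inner_EBl f g (h : {set I} * I -> R) :
  inner_E (fun e => f e - g e) h = inner_E f h - inner_E g h.
Proof. by rewrite /inner_E -sumrB; apply: eq_bigr => e _; rewrite mulrBl. Qed.

End Divergence.

Section NormalEquation.
Variables (R : realDomainType) (I : finType).
Implicit Types (f : {set I} * I -> R) (u z : {set I} -> R).

Lemma dV_eq0_const z : (forall e, is_edge e -> dV z e = 0) -> forall X, z X = z set0.
Proof.
move=> dz0; apply: hypercube_const => S j jS.
by apply/eqP; rewrite -subr_eq0; apply/eqP; exact: (dz0 (S, j)).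
Qed.

Lemma inner_E_self_eq0 z : inner_E (dV z) (dV z) = 0 -> forall e, is_edge e -> dV z e = 0.
Proof.
move=> /psumr_eq0P dz0 e edge_e; apply/eqP; rewrite -sqrf_eq0 expr2.
by apply/eqP/dz0 => // e' _; rewrite -expr2 sqr_ge0.
Qed.

Lemma normal_eq_unique f u1 u2 :
  (forall w, inner_E (fun e => f e - dV u1 e) (dV w) = 0) ->
  (forall w, inner_E (fun e => f e - dV u2 e) (dV w) = 0) ->
  forall X, u1 X - u1 set0 = u2 X - u2 set0.
Proof.
move=> orth1 orth2 X; pose z Y := u1 Y - u2 Y.
have dz_self : inner_E (dV z) (dV z) = 0.
  rewrite -(subrr 0) -{1}(orth2 z) -(orth1 z) -inner_EBl.
  by apply: eq_bigr => e _; rewrite /dV /z; ring.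
apply/eqP; rewrite -subr_eq0; apply/eqP; transitivity (z X - z set0).
  by rewrite /z; ring.
by rewrite (dV_eq0_const (inner_E_self_eq0 dz_self) X) subrr.
Qed.
End NormalEquation.

Section ComponentGame.
Variables (R : realFieldType) (I : finType) (v : {set I} -> R) (i : I).
Implicit Types (S T U X : {set I}).
Local Notation n := #|I|.
Local Notation c k := (coef R n k).
Local Notation h := (ui_plus v i).

Lemma coef_green (U : {set I}) : i \notin U ->
  2%:R * c #|U| + \sum_(j | j != i) (c #|U| - c #|toggle U j|)
  = if U == set0 then (n * 2 ^ n)%:R else 0.
Proof.
move=> iU; have n_gt0 : (0 < n)%N by apply/card_gt0P; exists i.
have cardUC : (#|U| + #|~: U| = n)%N := cardsC U.
have cardUCi : #|~: U| = (#|~: U :\ i|).+1 by rewrite (cardsD1 i) inE iU.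
rewrite -cards_eq0 -coef_recurrence ?n_gt0 //; last by lia.
rewrite -addrA; congr (_ + _); rewrite (bigID (mem U)) /=.
rewrite [X in X + _](eq_big (fun j => j \in U) (fun=> c #|U| - c #|U|.-1)); first last.
- by move=> j /andP[_ jU]; rewrite card_toggle jU.
- by move=> j; apply/andb_idl => jU; apply: contraNneq iU => <-.
rewrite [X in _ + X](eq_big (fun j => j \in ~: U :\ i) (fun=> c #|U| - c #|U|.+1)); first last.
- by move=> j /andP[_ jU]; rewrite card_toggle (negbTE jU).
- by move=> j; rewrite !inE andbC.
rewrite !sumr_const !mulr_natl; by congr (_ + _ *+ _); rewrite -cardUC cardUCi addnS addKn.
Qed.

Lemma ui_plus_green S : i \notin S ->
  h S + h S + \sum_(j | j != i) (h S - h (toggle S j)) = v (i |: S) - v S.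
Proof.
move=> iS; pose F X := \sum_(T : {set I} | i \notin T) c #|symdiff X T| * (v (i |: T) - v T).
have n2n_neq0 : (n * 2 ^ n)%:R != 0 :> R.
  by rewrite pnatr_eq0 muln_eq0 expn_eq0 negb_or andbT -lt0n; apply/card_gt0P; exists i.
have -> : h = fun X => (n * 2 ^ n)%:R^-1 * F X by [].
under eq_bigr do rewrite -mulrBr.
rewrite -mulr_sumr -!mulrDr; apply: canLR (mulKf n2n_neq0) _.
rewrite /F; under [\sum_(j | j != i) _]eq_bigr do rewrite -sumrB.
rewrite exchange_big -!big_split /=.
rewrite (eq_bigr (fun T => (if T == S then (n * 2 ^ n)%:R else 0) * (v (i |: T) - v T))).
  by rewrite (bigD1 S) //= eqxx big1 ?addr0 // => T /andP[_ /negbTE ->]; rewrite mul0r.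
move=> T iT; rewrite eq_sym -symdiff_eq0 -coef_green; last first.
  by rewrite in_symdiff (negbTE iS) (negbTE iT).
under eq_bigr do rewrite -mulrBl symdiff_toggle.
by rewrite -mulr_suml; ring.
Qed.

Lemma ui_in X : i \in X -> ui v i X = h (X :\ i).
Proof. by rewrite /ui => ->. Qed.

Lemma ui_notin X : i \notin X -> ui v i X = - h X.
Proof. by rewrite /ui => /negbTE ->. Qed.

Lemma lapV_ui X : lapV (ui v i) X = div_E (dVi i v) X.
Proof.
rewrite /lapV div_dVi (bigD1 i) //=; case: ifPn => iX.
  have iXi : i \notin X :\ i by rewrite setD11.
  rewrite toggle_in // ui_in // ui_notin // opprK -[in v X](setD1K iX) -ui_plus_green //.
  congr (_ + _); apply: eq_bigr => j ji.
  by rewrite (ui_in (X := toggle X j)) ?in_toggle_neq // toggleD1.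
rewrite toggle_notin // ui_notin // ui_in ?setU11 // setU1K // -ui_plus_green //.
rewrite !opprD -sumrN; congr (_ + _); apply: eq_bigr => j ji.
by rewrite (ui_notin (X := toggle X j)) ?in_toggle_neq // opprB opprK addrC.
Qed.

Lemma ui_normal_eq w :
  inner_E (fun e => dVi i v e - dV (ui v i) e) (dV w) = 0.
Proof. by rewrite inner_E_dV big1 // => X _; rewrite div_EB div_dV lapV_ui subrr mul0r. Qed.

Lemma component_game_ui : component_game v i (fun X => ui v i X - ui v i set0).
Proof.
split; first by rewrite subrr.
split; first by exists (fun X => ui v i X - ui v i set0).
move=> w; rewrite -(ui_normal_eq w); apply: eq_bigr => e _.
by rewrite /dV; ring.
Qed.

Lemma component_game_unique vi : component_game v i vi ->
  forall X, vi X = ui v i X - ui v i set0.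
Proof.
move=> [vi0 [_ vi_normal]] X.
by rewrite -(normal_eq_unique vi_normal ui_normal_eq) vi0 subr0.
Qed.

Lemma ui_set0 : ui v i set0 =
  - ((n * 2 ^ n)%N%:R^-1 * \sum_(T : {set I} | i \notin T) c #|T| * (v (i |: T) - v T)).
Proof. by rewrite ui_notin ?in_set0 // /ui_plus; under eq_bigr do rewrite symdiff0s. Qed.

End ComponentGame.

Theorem theorem3p9 (R : realFieldType) (I : finType) (v : {set I} -> R)
  (hv : v set0 = 0) (i : I) :
  component_game v i (fun S => ui v i S - ui v i set0) /\
  (forall vi : {set I} -> R, component_game v i vi ->
     forall S : {set I}, vi S = ui v i S - ui v i set0) /\
  ui v i set0 =
    - ((#|I| * 2 ^ #|I|)%N%:R^-1 *
       \sum_(T : {set I} | i \notin T)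
          (\sum_(#|T|.+1 <= m < #|I|.+1) 'C(#|I|, m))%N%:R
            / ('C(#|I|.-1, #|T|))%:R * (v (i |: T) - v T)).
Proof.
split; first exact: component_game_ui.
split; first exact: component_game_unique.
exact: ui_set0.
Qed.
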